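(* In a realisation of a local affine Gaudin model (setting below), let $\mathcal Q(z)=-\frac{1}{2\varphi(z)}\int_{\mathbb D}dx\,\kappa\big(\Gamma(z,x),\Gamma(z,x)\big)$. Then $\mathcal Q(z)=-\sum_{\alpha\in\Sigma}\sum_{p=0}^{m_\alpha-1}\frac{\mathcal D^\alpha_{[p]}}{(z-z_\alpha)^{p+1}}+\mathcal Q_{\rm reg}(z)$, where $\mathcal Q_{\rm reg}(z)$ is regular at all positions $z_\alpha$, $\alpha\in\Sigma$.
   Context: $\mathfrak g$: finite-dimensional simple complex Lie algebra, $\kappa$: minus its Killing form, $C_{12}=I_a\otimes I^a$ for dual bases w.r.t. $\kappa$; $\mathfrak g_0$: real form, fixed points of an antilinear involution $\tau$. $\mathbb D$ is $\mathbb R$ or the circle; $\delta'_{xy}=\partial_x\delta(x-y)$. Data: a finite set of sites $\Sigma=\Sigma_r\sqcup\Sigma_c\sqcup\bar\Sigma_c$ (real sites, complex sites, their conjugates $\bar\alpha$), multiplicities $m_\alpha\ge1$ ($m_{\bar\alpha}=m_\alpha$), levels $\ell^\alpha_{[p]}$, $0\le p\le m_\alpha-1$ (real for real sites, $\ell^{\bar\alpha}_{[p]}=\overline{\ell^\alpha_{[p]}}$), with $\ell^\alpha_{[m_\alpha-1]}\neq0$; pairwise distinct positions $z_\alpha$ (real for real sites, $z_{\bar\alpha}=\overline{z_\alpha}$); a real $\ell^\infty\neq0$. A realisation is a Poisson algebra $\mathcal A$ of local observables of a field theory on $\mathbb D$ containing $\mathfrak g$-valued fields $\mathcal J^\alpha_{[p]}(x)$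 with $\{\mathcal J^\alpha_{[p]}{}_1(x),\mathcal J^\beta_{[q]}{}_2(y)\}=\delta_{\alpha\beta}([C_{12},\mathcal J^\alpha_{[p+q]}{}_1(x)]\delta_{xy}-\ell^\alpha_{[p+q]}C_{12}\delta'_{xy})$ if $p+q<m_\alpha$ and $0$ otherwise, with reality conditions $\tau(\mathcal J^\alpha_{[p]})=\mathcal J^\alpha_{[p]}$ (real $\alpha$), $\tau(\mathcal J^\alpha_{[p]})=\mathcal J^{\bar\alpha}_{[p]}$ (complex $\alpha$). Twist function $\varphi(z)=\sum_{\alpha\in\Sigma}\sum_{p=0}^{m_\alpha-1}\frac{\ell^\alpha_{[p]}}{(z-z_\alpha)^{p+1}}-\ell^\infty$; Gaudin Lax matrix $\Gamma(z,x)=\sum_\alpha\sum_p\frac{\mathcal J^\alpha_{[p]}(x)}{(z-z_\alpha)^{p+1}}$. For each $\alpha$, $\eta^\alpha_{[p]}$ ($0\le p\le 2m_\alpha-2$) denotes the unique solution of $\sum_{p=0}^{m_\alpha-1-r}\eta^\alpha_{[p+q]}\ell^\alpha_{[p+r]}=\delta_{q,r}$ for all $q,r\in\{0,\dots,m_\alpha-1\}$, and $\mathcal D^\alpha_{[p]}=\frac12\sum_{q,r=0,\,q+r\ge p}^{m_\alpha-1}\eta^\alpha_{[q+r-p]}\int_{\mathbb D}dx\,\kappa(\mathcal J^\alpha_{[q]}(x),\mathcal J^\alpha_{[r]}(x))$. *)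

From mathcomp Require Import all_boot all_order all_algebra.
From mathcomp Require Import complex Rstruct.
Set Implicit Arguments. Unset Strict Implicit. Unset Printing Implicit Defensive.
Import Order.TTheory GRing.Theory Num.Theory.
Local Open Scope ring_scope.

Definition C : numClosedFieldType := Rdefinitions.R[i].

Section Gaudin.
Variables (Sigma : finType) (m : Sigma -> nat) (ell : Sigma -> nat -> C)
  (zs : Sigma -> C) (ellinf : C).

Definition twist (w : C) : C :=
  \sum_(a : Sigma) \sum_(p < m a) ell a p / (w - zs a) ^+ p.+1 - ellinf.

Definition off_sites (w : C) : Prop := forall a : Sigma, w != zs a.

Definition eta_spec (eta : Sigma -> nat -> C) : Prop :=
  forall (a : Sigma) (q r : nat), (q < m a)%N -> (r < m a)%N ->
    \sum_(0 <= p < (m a - r)%N) eta a (p + q)%N * ell a (p + r)%N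
      = (q == r)%:R.

Variables (F A : lmodType C).
(* F: space of g-valued fields on D;  B X Y = \int_D dx kappa(X(x), Y(x)) in A *)
Variables (J : Sigma -> nat -> F) (B : F -> F -> A) (eta : Sigma -> nat -> C).

Definition Gamma (w : C) : F :=
  \sum_(a : Sigma) \sum_(p < m a) ((w - zs a) ^+ p.+1)^-1 *: J a p.

Definition Qfun (w : C) : A := - ((2 * twist w)^-1 *: B (Gamma w) (Gamma w)).

Definition Dcharge (a : Sigma) (p : nat) : A :=
  2^-1 *: \sum_(q < m a) \sum_(r < m a | (p <= q + r)%N)
            eta a (q + r - p)%N *: B (J a q) (J a r).

Definition Qreg (w : C) : A :=
  Qfun w + \sum_(a : Sigma) \sum_(p < m a) ((w - zs a) ^+ p.+1)^-1 *: Dcharge a p.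

End Gaudin.

Definition regular_at (A : lmodType C) (dom : C -> Prop) (f : C -> A) (z0 : C)
  : Prop :=
  exists (n : nat) (coef : 'I_n -> A) (P : {poly C}),
    P.[z0] != 0 /\
    forall w : C, dom w -> P.[w] != 0 ->
      f w = (P.[w])^-1 *: \sum_(i < n) w ^+ i *: coef i.

From HB Require Import structures.
From mathcomp Require Import all_boot all_order all_algebra.
From mathcomp Require Import complex Rstruct.
From mathcomp Require Import ring zify.
Set Implicit Arguments. Unset Strict Implicit. Unset Printing Implicit Defensive.
Import Order.TTheory GRing.Theory Num.Theory.
Local Open Scope ring_scope.

(* Fix a site [a0] with position z0 and multiplicity m, and put u = z - z0.
   Near z0 one has Gamma = u^-m (U + u^m G) and phi = u^-m N, with U and N
   polynomial in u, G regular at z0 and N(z0) = ell_[m-1] <> 0, so that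
   Q = -(2 N u^m)^-1 B(U + u^m G, U + u^m G).  The relations defining eta say
   exactly that L(u) C_(q+r)(u) = u^(2m-2-q-r) mod u^m, where
   L(u) = sum_p ell_[p] u^(m-1-p) and C_s(u) = sum_(p <= s) eta_[s-p] u^(m-1-p);
   summed against B(J_q, J_r) this gives 2 L D - B(U, U) = u^m E with
   D(u) = sum_p u^(m-1-p) D_[p] and E polynomial.  Hence in Q + u^-m D, i.e. Q
   with its principal part at z0 removed, the factor u^-m cancels and only the
   denominator N, which does not vanish at z0, remains. *)

Section PolynomialFunction.
Variable V : lmodType C.

Definition polyfun (f : C -> V) :=
  exists s : seq (nat * V), forall w, f w = \sum_(x <- s) w ^+ x.1 *: x.2.

Lemma polyfun_ext f g : f =1 g -> polyfun f -> polyfun g.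
Proof. by move=> fg [s Hs]; exists s => w; rewrite -fg. Qed.

Lemma polyfun_cst v : polyfun (fun _ => v).
Proof. by exists [:: (0%N, v)] => w; rewrite big_seq1 scale1r. Qed.

Lemma polyfunD f g : polyfun f -> polyfun g -> polyfun (fun w => f w + g w).
Proof. by move=> [s Hs] [t Ht]; exists (s ++ t) => w; rewrite big_cat Hs Ht. Qed.

Lemma polyfun_sum (I : Type) (r : seq I) (P : pred I) (f : I -> C -> V) :
  (forall i, P i -> polyfun (f i)) -> polyfun (fun w => \sum_(i <- r | P i) f i w).
Proof.
move=> Hf; elim: r => [|i r IHr].
  by apply: polyfun_ext (polyfun_cst 0) => w; rewrite big_nil.
case Pi: (P i).
  by apply: polyfun_ext (polyfunD (Hf i Pi) IHr) => w; rewrite big_cons Pi.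
by apply: polyfun_ext IHr => w; rewrite big_cons Pi.
Qed.

Lemma polyfun_ord f : polyfun f ->
  exists n (c : 'I_n -> V), forall w, f w = \sum_(i < n) w ^+ i *: c i.
Proof.
move=> [s Hs]; pose n := (\max_(x <- s) x.1.+1)%N.
exists n, (fun i => \sum_(x <- s | x.1 == i :> nat) x.2) => w.
rewrite Hs; under [RHS]eq_bigr do rewrite scaler_sumr big_mkcond.
rewrite exchange_big /=; apply: eq_big_seq => x xs.
have x1n : (x.1 < n)%N by apply: (@leq_bigmax_seq _ s xpredT (fun x => x.1.+1)).
rewrite (bigD1 (Ordinal x1n)) //= eqxx big1 ?addr0 // => i /negPf ni.
by case: eqP => // e; move/negbT: ni; case/negP; apply/eqP/val_inj.
Qed.
End PolynomialFunction.

Lemma polyfun_horner (p : {poly C}) : polyfun (fun w => p.[w] : C^o).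
Proof.
exists [seq (i, p`_i) | i <- iota 0 (size p)] => w.
rewrite horner_coef big_map -val_enum_ord big_map big_enum.
by apply: eq_bigr => i _; rewrite mulrC.
Qed.

Lemma polyfun_scalar (f : C -> C^o) : polyfun f -> exists p : {poly C}, f =1 horner p.
Proof.
move=> [s Hs]; exists (\sum_(x <- s) x.2 *: 'X^(x.1)) => w.
rewrite Hs horner_sum; apply: eq_bigr => x _.
by rewrite hornerZ hornerXn mulrC.
Qed.

Section Bilinear.
Variables (U V W : lmodType C) (b : U -> V -> W).
Hypotheses (b_linl : forall v, linear (b^~ v)) (b_linr : forall u, linear (b u)).

Let bl v : {linear U -> W} := HB.pack (b^~ v) (GRing.isLinear.Build _ _ _ _ _ (b_linl v)).
Let br u : {linear V -> W} := HB.pack (b u) (GRing.isLinear.Build _ _ _ _ _ (b_linr u)).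

Lemma bilinZl c u v : b (c *: u) v = c *: b u v.
Proof. exact: (linearZ_LR (bl v)). Qed.
Lemma bilinZr c u v : b u (c *: v) = c *: b u v.
Proof. exact: (linearZ_LR (br u)). Qed.
Lemma bilinDl u u' v : b (u + u') v = b u v + b u' v.
Proof. exact: (linearD (bl v)). Qed.
Lemma bilinDr u v v' : b u (v + v') = b u v + b u v'.
Proof. exact: (linearD (br u)). Qed.
Lemma bilin_suml (I : Type) (r : seq I) (P : pred I) (F : I -> U) v :
  b (\sum_(i <- r | P i) F i) v = \sum_(i <- r | P i) b (F i) v.
Proof. exact: (linear_sum (bl v)). Qed.
Lemma bilin_sumr (I : Type) (r : seq I) (P : pred I) u (F : I -> V) :
  b u (\sum_(i <- r | P i) F i) = \sum_(i <- r | P i) b u (F i).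
Proof. exact: (linear_sum (br u)). Qed.

Lemma polyfun_bilin f g : polyfun f -> polyfun g -> polyfun (fun w => b (f w) (g w)).
Proof.
move=> [s Hs] [t Ht]; exists [seq (x.1 + y.1, b x.2 y.2)%N | x <- s, y <- t] => w.
rewrite Hs Ht big_allpairs_dep bilin_suml; apply: eq_bigr => x _.
rewrite bilin_sumr; apply: eq_bigr => y _.
by rewrite bilinZl bilinZr scalerA exprD.
Qed.
End Bilinear.

Lemma scale_linl (V : lmodType C) (v : V) : linear (fun c : C^o => c *: v).
Proof. by move=> a c c'; rewrite scalerDl scalerA. Qed.

Lemma scale_linr (V : lmodType C) (c : C) : linear (fun v : V => c *: v).
Proof. by move=> a v v'; rewrite scalerDr !scalerA mulrC. Qed.

Lemma polyfun_hornerZ (V : lmodType C) (p : {poly C}) (f : C -> V) :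
  polyfun f -> polyfun (fun w => p.[w] *: f w).
Proof. exact: (polyfun_bilin (@scale_linl V) (@scale_linr V) (polyfun_horner p)). Qed.

Lemma polyfun_shiftZ (V : lmodType C) (p : {poly C}) (z : C) (v : V) :
  polyfun (fun w => p.[w - z] *: v).
Proof.
apply: polyfun_ext (polyfun_hornerZ (p \Po ('X - z%:P)) (polyfun_cst v)) => w.
by rewrite horner_comp hornerXsubC.
Qed.

Section RegularFraction.
Variable z0 : C.

Definition regular_frac (V : lmodType C) (f : C -> V) :=
  exists (P : {poly C}) (N : C -> V),
    [/\ P.[z0] != 0, polyfun N & forall w, P.[w] != 0 -> f w = P.[w]^-1 *: N w].

Lemma regular_frac_ext (V : lmodType C) (f g : C -> V) :
  f =1 g -> regular_frac f -> regular_frac g.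
Proof. by move=> fg [P [N [P0 HN Hf]]]; exists P, N; split=> // w /Hf; rewrite fg. Qed.

Lemma polyfun_regular (V : lmodType C) (f : C -> V) : polyfun f -> regular_frac f.
Proof.
move=> Hf; exists 1%:P, f; split; rewrite ?hornerC ?oner_eq0 // => w _.
by rewrite hornerC invr1 scale1r.
Qed.

Lemma regular_fracD (V : lmodType C) (f g : C -> V) :
  regular_frac f -> regular_frac g -> regular_frac (fun w => f w + g w).
Proof.
move=> [P [N [P0 HN Hf]]] [Q [M [Q0 HM Hg]]].
exists (P * Q), (fun w => Q.[w] *: N w + P.[w] *: M w); split.
- by rewrite hornerM mulf_neq0.
- by apply: polyfunD; apply: polyfun_hornerZ.
move=> w; rewrite hornerM mulf_eq0 negb_or => /andP[Pw Qw].
rewrite Hf // Hg // scalerDr !scalerA invfM.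
by congr (_ *: _ + _ *: _); field; rewrite Pw Qw.
Qed.

Lemma regular_frac_sum (V : lmodType C) (I : Type) (r : seq I) (P : pred I)
    (f : I -> C -> V) :
  (forall i, P i -> regular_frac (f i)) ->
  regular_frac (fun w => \sum_(i <- r | P i) f i w).
Proof.
move=> Hf; elim: r => [|i r IHr].
  by apply: regular_frac_ext (polyfun_regular (polyfun_cst 0)) => w; rewrite big_nil.
case Pi: (P i).
  by apply: regular_frac_ext (regular_fracD (Hf i Pi) IHr) => w; rewrite big_cons Pi.
by apply: regular_frac_ext IHr => w; rewrite big_cons Pi.
Qed.

Lemma regular_frac_bilin (U V W : lmodType C) (b : U -> V -> W) f g :
  (forall v, linear (b^~ v)) -> (forall u, linear (b u)) ->
  regular_frac f -> regular_frac g -> regular_frac (fun w => b (f w) (g w)).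
Proof.
move=> bl br [P [N [P0 HN Hf]]] [Q [M [Q0 HM Hg]]].
exists (P * Q), (fun w => b (N w) (M w)); split.
- by rewrite hornerM mulf_neq0.
- exact: polyfun_bilin.
move=> w; rewrite hornerM mulf_eq0 negb_or => /andP[Pw Qw].
by rewrite Hf // Hg // (bilinZl bl) (bilinZr br) scalerA invfM mulrC.
Qed.

Lemma regular_fracZ (V : lmodType C) (h : C -> C) (f : C -> V) :
  regular_frac (h : C -> C^o) -> regular_frac f ->
  regular_frac (fun w => h w *: f w).
Proof. exact: regular_frac_bilin (@scale_linl V) (@scale_linr V). Qed.

Lemma regular_frac_horner (p : {poly C}) : regular_frac (horner p : C -> C^o).
Proof. exact: polyfun_regular (polyfun_horner p). Qed.

Lemma regular_fracN (V : lmodType C) (f : C -> V) :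
  regular_frac f -> regular_frac (fun w => - f w).
Proof.
move=> Hf; apply: regular_frac_ext (regular_fracZ (regular_frac_horner (-1)%:P) Hf) => w.
by rewrite hornerC scaleN1r.
Qed.

Lemma regular_frac_shift (z : C) (p : {poly C}) :
  regular_frac ((fun w => p.[w - z]) : C -> C^o).
Proof.
apply: regular_frac_ext (regular_frac_horner (p \Po ('X - z%:P))) => w.
by rewrite horner_comp hornerXsubC.
Qed.

Lemma regular_frac_inv (h : C -> C) : regular_frac (h : C -> C^o) -> h z0 != 0 ->
  regular_frac ((fun w => (h w)^-1) : C -> C^o).
Proof.
move=> [P [N [P0 HN Hh]]] hz0.
have [Q NQ] := polyfun_scalar HN.
have Q0 : Q.[z0] != 0.
  by apply: contraNneq hz0; rewrite Hh // NQ => ->; rewrite scaler0.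
exists (P * Q), (horner (P * P)); split; last 1 first.
- move=> w; rewrite hornerM mulf_eq0 negb_or => /andP[Pw Qw].
  by rewrite Hh // NQ /GRing.scale /= hornerM; field; rewrite Pw Qw.
- by rewrite hornerM mulf_neq0.
- exact: polyfun_horner.
Qed.

Lemma regular_frac_invXsubC (z : C) (n : nat) : z0 != z ->
  regular_frac ((fun w => ((w - z) ^+ n)^-1) : C -> C^o).
Proof.
move=> z0z; exists (('X - z%:P) ^+ n), (fun=> 1); split.
- by rewrite horner_exp hornerXsubC expf_neq0 // subr_eq0.
- exact: polyfun_cst.
by move=> w _; rewrite horner_exp hornerXsubC /GRing.scale /= mulr1.
Qed.

Lemma regular_frac_regular_at (V : lmodType C) (dom : C -> Prop) (f g : C -> V) :
  regular_frac g -> (forall w, dom w -> f w = g w) -> regular_at dom f z0.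
Proof.
move=> [P [N [P0 HN Hg]]] fg; have [n [c Hc]] := polyfun_ord HN.
by exists n, c, P; split=> // w /fg -> /Hg ->; rewrite Hc.
Qed.
End RegularFraction.

Definition poly_rev (m : nat) (c : nat -> C) : {poly C} := \poly_(k < m) c (m.-1 - k)%N.

Lemma coef_poly_rev m c k : (poly_rev m c)`_k = if (k < m)%N then c (m.-1 - k)%N else 0.
Proof. exact: coef_poly. Qed.

Lemma horner_poly_rev m c x :
  (poly_rev m c).[x] = \sum_(p < m) c p * x ^+ (m.-1 - p).
Proof.
rewrite horner_poly (reindex_inj rev_ord_inj); apply: eq_bigr => p _ /=.
have pm := ltn_ord p; congr (c _ * x ^+ _); lia.
Qed.

Section EtaInverse.
Variables (m : nat) (l e : nat -> C).
Hypothesis e_spec : forall q r, (q < m)%N -> (r < m)%N ->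
  \sum_(0 <= p < m - r) e (p + q)%N * l (p + r)%N = (q == r)%:R.
Hypothesis l_top : l m.-1 != 0.
Hypothesis m_gt0 : (0 < m)%N.

Lemma eta_low j : (j < m.-1)%N -> e j = 0.
Proof.
move=> jm; have := e_spec (q := j) (r := m.-1).
have -> : (m - m.-1 = 1)%N by lia.
rewrite big_nat1 add0n (ltn_eqF jm) => /(_ ltac:(lia) ltac:(lia)) /eqP.
by rewrite mulf_eq0 (negPf l_top) orbF => /eqP.
Qed.

Definition ell_poly : {poly C} := poly_rev m l.
Definition eta_poly (s : nat) : {poly C} :=
  poly_rev m (fun p => if (p <= s)%N then e (s - p)%N else 0).

Lemma coef_ell_eta_poly n s : (n < m)%N -> (s <= (m.-1).*2)%N ->
  (ell_poly * eta_poly s)`_n = (n + s == (m.-1).*2)%:R.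
Proof.
move=> nm s2m; rewrite coefM.
under eq_bigr => j _ do
  rewrite !coef_poly_rev (leq_ltn_trans (leq_ord j) nm) (leq_ltn_trans (leq_subr j n) nm).
have [sm|ms] := ltnP s m.-1.
  rewrite big1 => [|j _]; last by case: ifP => _; rewrite ?eta_low ?mulr0 //; lia.
  by have -> : (n + s == (m.-1).*2) = false by apply/eqP; lia.
have -> : (n + s == (m.-1).*2) = (s - m.-1 == m.-1 - n)%N by apply/eqP/eqP; lia.
rewrite -(e_spec (q := (s - m.-1)%N) (r := (m.-1 - n)%N)); [|lia|lia].
have -> : (m - (m.-1 - n) = n.+1)%N by lia.
rewrite big_mkord (reindex_inj rev_ord_inj); apply: eq_bigr => j _ /=.
have jn := ltn_ord j; rewrite ifT; last by lia.
by rewrite mulrC; congr (e _ * l _); lia.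
Qed.

Definition eta_rem (q r : nat) : {poly C} :=
  drop_poly m (ell_poly * eta_poly (q + r) - 'X^(m.-1 - q + (m.-1 - r))).

Lemma ell_eta_polyE q r : (q < m)%N -> (r < m)%N ->
  ell_poly * eta_poly (q + r) = 'X^(m.-1 - q + (m.-1 - r)) + eta_rem q r * 'X^m.
Proof.
move=> qm rm; rewrite /eta_rem; set T := _ - _.
have take_T : take_poly m T = 0.
  apply/polyP => n; rewrite coef_take_poly coef0 coefB coefXn.
  case: ltnP => // nm; rewrite coef_ell_eta_poly //; last by lia.
  have -> : (n + (q + r) == (m.-1).*2) = (n == m.-1 - q + (m.-1 - r))%N.
    by apply/eqP/eqP; lia.
  by rewrite subrr.
have := poly_take_drop m T; rewrite take_T add0r => ->.
by rewrite /T addrC subrK.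
Qed.
End EtaInverse.

(* With c = u^m, X = B(U, G) and Y = B(G, G), the left side is Q + u^-m D
   computed from Gamma = c^-1 (U + c G), twist = c^-1 (L + c phi) and
   B(U, U) = 2 L D - c E. *)
Lemma pole_cancellation_identity (V : lmodType C) (Dp E X Y : V) (c L phi : C) :
  c != 0 -> L + c * phi != 0 ->
  - ((2 * (c^-1 * (L + c * phi)))^-1 *:
       (c^-1 *: (c^-1 *: ((2 * L) *: Dp - c *: E + c *: X + (c *: X + c *: (c *: Y))))))
    + c^-1 *: Dp
  = (2 * (L + c * phi))^-1 *: (E + (2 * phi) *: Dp - 2 *: X - c *: Y).
Proof.
move=> c0 N0; pose lc a b x y := a *: Dp + b *: E + x *: X + y *: Y.
have lcD a b x y a' b' x' y' :
    lc a b x y + lc a' b' x' y' = lc (a + a') (b + b') (x + x') (y + y').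
  rewrite /lc !scalerDl [LHS]addrACA; congr (_ + _).
  by rewrite [LHS]addrACA; congr (_ + _); apply: addrACA.
have lcZ k a b x y : k *: lc a b x y = lc (k * a) (k * b) (k * x) (k * y).
  by rewrite /lc !scalerDr !scalerA.
have lcN a b x y : - lc a b x y = lc (- a) (- b) (- x) (- y).
  by rewrite -scaleN1r lcZ !mulN1r.
have -> : Dp = lc 1 0 0 0 by rewrite /lc !scale0r !addr0 scale1r.
have -> : E = lc 0 1 0 0 by rewrite /lc !scale0r add0r !addr0 scale1r.
have -> : X = lc 0 0 1 0 by rewrite /lc !scale0r !add0r addr0 scale1r.
have -> : Y = lc 0 0 0 1 by rewrite /lc !scale0r !add0r scale1r.
rewrite !(lcZ, lcN, lcD).
by congr lc; field; rewrite c0 N0.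
Qed.

Lemma invf_exprS_split (x : C) (n p : nat) : (p < n)%N -> x != 0 ->
  (x ^+ p.+1)^-1 = (x ^+ n)^-1 * x ^+ (n.-1 - p).
Proof.
move=> pn x0; have {1}-> : n = (n.-1 - p + p.+1)%N by lia.
by rewrite exprD invfM mulrAC mulVf ?expf_neq0 ?mul1r.
Qed.

Section Site.
Variables (Sigma : finType) (m : Sigma -> nat) (ell : Sigma -> nat -> C)
  (zs : Sigma -> C) (ellinf : C) (F A : lmodType C) (J : Sigma -> nat -> F)
  (B : F -> F -> A) (eta : Sigma -> nat -> C).
Hypotheses (Hm_pos : forall a, (0 < m a)%N) (Hell_top : forall a, ell a (m a).-1 != 0)
  (Hz_inj : injective zs) (HBsym : forall X Y, B X Y = B Y X)
  (HBlin : forall (c : C) X Y W, B (c *: X + Y) W = c *: B X W + B Y W)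
  (Heta : eta_spec m ell eta).
Variable a0 : Sigma.

Local Notation z0 := (zs a0).
Local Notation m0 := (m a0).

Let Bl W : linear (B^~ W). Proof. by move=> c X Y; apply: HBlin. Qed.
Let Br X : linear (B X). Proof. by move=> c Y W; rewrite !(HBsym X) Bl. Qed.

Lemma pole_split (V : lmodType C) (v : Sigma -> nat -> V) w : w != z0 ->
  \sum_a \sum_(p < m a) ((w - zs a) ^+ p.+1)^-1 *: v a p
  = ((w - z0) ^+ m0)^-1 *: \sum_(p < m0) (w - z0) ^+ (m0.-1 - p) *: v a0 p
    + \sum_(a | a != a0) \sum_(p < m a) ((w - zs a) ^+ p.+1)^-1 *: v a p.
Proof.
rewrite -subr_eq0 => wz; rewrite (bigD1 a0) //=; congr (_ + _).
rewrite scaler_sumr; apply: eq_bigr => p _.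
by rewrite scalerA -invf_exprS_split.
Qed.

Lemma regular_frac_pole_off (V : lmodType C) (v : Sigma -> nat -> V) :
  regular_frac z0
    (fun w => \sum_(a | a != a0) \sum_(p < m a) ((w - zs a) ^+ p.+1)^-1 *: v a p).
Proof.
apply: regular_frac_sum => a aa0; apply: regular_frac_sum => p _.
apply: regular_fracZ; last exact/polyfun_regular/polyfun_cst.
by apply: regular_frac_invXsubC; apply: contra aa0 => /eqP/Hz_inj ->.
Qed.

Definition Gamma_pole w := \sum_(q < m0) (w - z0) ^+ (m0.-1 - q) *: J a0 q.
Definition Gamma_reg w :=
  \sum_(a | a != a0) \sum_(p < m a) ((w - zs a) ^+ p.+1)^-1 *: J a p.
Definition twist_reg w :=
  \sum_(a | a != a0) \sum_(p < m a) ell a p / (w - zs a) ^+ p.+1 - ellinf.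
Definition twist_numer w :=
  (ell_poly m0 (ell a0)).[w - z0] + (w - z0) ^+ m0 * twist_reg w.
Definition D_pole w :=
  \sum_(p < m0) (w - z0) ^+ (m0.-1 - p) *: Dcharge m J B eta a0 p.
Definition D_reg w :=
  \sum_(a | a != a0) \sum_(p < m a) ((w - zs a) ^+ p.+1)^-1 *: Dcharge m J B eta a p.
Definition D_rem w := \sum_(q < m0) \sum_(r < m0)
  (eta_rem m0 (ell a0) (eta a0) q r).[w - z0] *: B (J a0 q) (J a0 r).

Definition Qreg_local w :=
  (2 * twist_numer w)^-1 *: (D_rem w + (2 * twist_reg w) *: D_pole w
     - 2 *: B (Gamma_pole w) (Gamma_reg w)
     - (w - z0) ^+ m0 *: B (Gamma_reg w) (Gamma_reg w))
  + D_reg w.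

Lemma Gamma_split w : w != z0 ->
  Gamma m zs J w
  = ((w - z0) ^+ m0)^-1 *: (Gamma_pole w + (w - z0) ^+ m0 *: Gamma_reg w).
Proof.
move=> wz; rewrite /Gamma pole_split // scalerDr scalerA mulVf ?scale1r //.
by rewrite expf_neq0 // subr_eq0.
Qed.

Lemma twist_split w : w != z0 ->
  twist m ell zs ellinf w = ((w - z0) ^+ m0)^-1 * twist_numer w.
Proof.
move=> wz; rewrite /twist /twist_numer /twist_reg.
under eq_bigr do under eq_bigr do rewrite mulrC.
rewrite (pole_split (V := C^o)) // mulrDr mulrA mulVf ?expf_neq0 ?subr_eq0 // mul1r.
rewrite addrA horner_poly_rev; congr (_ * _ + _ - _); last first.
  by apply: eq_bigr => a _; apply: eq_bigr => p _; rewrite mulrC.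
by apply: eq_bigr => p _; rewrite mulrC.
Qed.

Lemma D_poleE w : D_pole w = 2^-1 *: \sum_(q < m0) \sum_(r < m0)
  (eta_poly m0 (eta a0) (q + r)).[w - z0] *: B (J a0 q) (J a0 r).
Proof.
rewrite /D_pole /Dcharge.
under eq_bigr do rewrite scalerA mulrC -scalerA.
rewrite -scaler_sumr; congr (_ *: _).
under eq_bigr do rewrite scaler_sumr.
rewrite exchange_big; apply: eq_bigr => q _.
under eq_bigr do rewrite scaler_sumr big_mkcond.
rewrite exchange_big; apply: eq_bigr => r _.
rewrite horner_poly_rev scaler_suml; apply: eq_bigr => p _.
by case: ifP => _; rewrite ?mul0r ?scale0r // scalerA mulrC.
Qed.

Lemma pole_cancellation w :
  (2 * (ell_poly m0 (ell a0)).[w - z0]) *: D_pole w - B (Gamma_pole w) (Gamma_pole w)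
  = (w - z0) ^+ m0 *: D_rem w.
Proof.
rewrite D_poleE scalerA mulrAC mulfV ?pnatr_eq0 // mul1r /Gamma_pole.
rewrite (bilin_suml Bl) scaler_sumr -sumrB /D_rem scaler_sumr.
apply: eq_bigr => q _; rewrite (bilinZl Bl) (bilin_sumr Br) !scaler_sumr -sumrB.
apply: eq_bigr => r _; rewrite (bilinZr Br) !scalerA -scalerBl -hornerM.
rewrite ell_eta_polyE ?ltn_ord //; last exact: Heta.
by rewrite hornerD hornerM !hornerXn exprD addrC addKr mulrC.
Qed.

Lemma QregE w : off_sites zs w -> twist m ell zs ellinf w != 0 ->
  Qreg m ell zs ellinf J B eta w = Qreg_local w.
Proof.
move=> /(_ a0) wz; rewrite twist_split // => tw.
have c0 : (w - z0) ^+ m0 != 0 by rewrite expf_neq0 // subr_eq0.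
have N0 : twist_numer w != 0 by apply: contra tw => /eqP ->; rewrite mulr0.
rewrite /Qreg pole_split // /Qfun Gamma_split // twist_split // addrA; congr (_ + _).
rewrite (bilinZl Bl) (bilinZr Br) !(bilinDl Bl, bilinDr Br, bilinZl Bl, bilinZr Br).
have BUU : B (Gamma_pole w) (Gamma_pole w) =
    (2 * (ell_poly m0 (ell a0)).[w - z0]) *: D_pole w - (w - z0) ^+ m0 *: D_rem w.
  by rewrite -pole_cancellation subKr.
by rewrite (HBsym (Gamma_reg w)) BUU pole_cancellation_identity.
Qed.

Lemma twist_reg_regular : regular_frac z0 (twist_reg : C -> C^o).
Proof.
apply: (regular_fracD (V := C^o)); last exact/polyfun_regular/polyfun_cst.
apply: regular_frac_ext (regular_frac_pole_off (V := C^o) ell) => w.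
by apply: eq_bigr => a _; apply: eq_bigr => p _; rewrite mulrC.
Qed.

Lemma regular_frac_subXn (k : nat) :
  regular_frac z0 ((fun w => (w - z0) ^+ k) : C -> C^o).
Proof.
by apply: regular_frac_ext (regular_frac_shift z0 z0 'X^k) => w; rewrite hornerXn.
Qed.

Lemma twist_numer_regular : regular_frac z0 (twist_numer : C -> C^o).
Proof.
apply: regular_fracD; first exact: regular_frac_shift.
exact: (regular_fracZ (V := C^o) (regular_frac_subXn m0) twist_reg_regular).
Qed.

Lemma twist_numer_z0 : twist_numer z0 = ell a0 m0.-1.
Proof.
rewrite /twist_numer subrr expr0n gtn_eqF // mul0r addr0 horner_coef0.
by rewrite coef_poly_rev Hm_pos subn0.
Qed.

Lemma Qreg_local_regular : regular_frac z0 Qreg_local.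
Proof.
have XnZ (V : lmodType C) (k : nat) (v : V) : polyfun (fun w => (w - z0) ^+ k *: v).
  by apply: polyfun_ext (polyfun_shiftZ 'X^k z0 v) => w; rewrite hornerXn.
have PU : polyfun Gamma_pole by apply: polyfun_sum => q _; apply: XnZ.
have PD : polyfun D_pole by apply: polyfun_sum => p _; apply: XnZ.
have PE : polyfun D_rem.
  by apply: polyfun_sum => q _; apply: polyfun_sum => r _; apply: polyfun_shiftZ.
have RU : regular_frac z0 Gamma_pole := polyfun_regular z0 PU.
have RG : regular_frac z0 Gamma_reg := regular_frac_pole_off J.
apply: regular_fracD (regular_frac_pole_off _); apply: regular_fracZ.
  apply: regular_frac_inv; last by rewrite twist_numer_z0 mulf_neq0 ?pnatr_eq0.
  apply: regular_frac_ext
    (regular_fracZ (V := C^o) (regular_frac_horner _ 2%:P) twist_numer_regular).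
  by move=> w; rewrite hornerC.
have R2 : regular_frac z0 ((fun=> 2) : C -> C^o).
  exact: polyfun_regular (polyfun_cst _).
apply: regular_fracD; last first.
  apply: regular_fracN; apply: regular_fracZ (regular_frac_subXn _) _.
  exact: (regular_frac_bilin (b := B) Bl Br RG RG).
apply: regular_fracD; last first.
  apply: regular_fracN; apply: regular_fracZ R2 _.
  exact: (regular_frac_bilin (b := B) Bl Br RU RG).
apply: regular_fracD (polyfun_regular z0 PE) (regular_fracZ _ (polyfun_regular z0 PD)).
exact: (regular_fracZ (V := C^o) R2 twist_reg_regular).
Qed.
End Site.

Unset Implicit Arguments.
Theorem propositionA3
  (Sigma : finType) (bar : Sigma -> Sigma)
  (m : Sigma -> nat) (ell : Sigma -> nat -> C) (zs : Sigma -> C) (ellinf : C)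
  (F A : lmodType C) (J : Sigma -> nat -> F) (B : F -> F -> A)
  (eta : Sigma -> nat -> C)
  (* sites: bar is an involution; real sites = fixed points, complex sites
     come in conjugate pairs (alpha, bar alpha) *)
  (Hbar : forall a, bar (bar a) = a)
  (Hm_pos : forall a, (0 < m a)%N)
  (Hm_bar : forall a, m (bar a) = m a)
  (Hell_bar : forall a p, ell (bar a) p = (ell a p)^*)
  (Hell_top : forall a, ell a (m a).-1 != 0)
  (Hz_bar : forall a, zs (bar a) = (zs a)^*)
  (Hz_inj : injective zs)
  (Hellinf_real : ellinf^* = ellinf) (Hellinf : ellinf != 0)
  (* B X Y = \int_D dx kappa(X(x),Y(x)): symmetric and bilinear *)
  (HBsym : forall X Y, B X Y = B Y X)
  (HBlin : forall (c : C) X Y W, B (c *: X + Y) W = c *: B X W + B Y W)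
  (Heta : eta_spec m ell eta) :
  forall a0 : Sigma,
    regular_at (fun w => off_sites zs w /\ twist m ell zs ellinf w != 0)
      (Qreg m ell zs ellinf J B eta) (zs a0).
Proof.
move=> a0; apply: (regular_frac_regular_at
  (Qreg_local_regular ellinf J eta Hm_pos Hell_top Hz_inj HBsym HBlin a0)).
by move=> w [off_w tw]; apply: (QregE J Hm_pos Hell_top HBsym HBlin Heta).
Qed.
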